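(* The configuration space $\Xi(\ell)\subset(\mathbb{RP}^1)^n$ is the algebraic variety given by the $\binom n2$ equations $$A_{pq}t_p^2t_q^2+B_{pq}t_p^2-2t_pt_q+B_{qp}t_q^2+E_{pq}=0,\qquad 1\le p<q\le n,$$ where $A_{pq}=h_{qp}+h_{pq}-2g_{pq}+E_{pq}$ and $B_{pq}=h_{qp}+E_{pq}$ (so $B_{qp}=h_{pq}+E_{pq}$).
   Context: $\mathbb{X}^n$ is one of $\mathbb{E}^n$; $\mathbb{S}^n$ (unit sphere in $\mathbb{E}^{n+1}$); $\Lambda^n$ (a sheet of the hyperboloid $(\mathbf{x},\mathbf{x})=-1$ in $\mathbb{E}^{n,1}$); tangent vectors are regarded as vectors of the ambient space $\mathbb{V}=\mathbb{E}^n,\mathbb{E}^{n+1},\mathbb{E}^{n,1}$. A cross-polytope has vertices $\mathbf{a}_1,\dots,\mathbf{a}_n,\mathbf{b}_1,\dots,\mathbf{b}_n$ and facets spanned by $n$-tuples containing exactly one of $\mathbf{a}_p,\mathbf{b}_p$ for each $p$ (all assumed non-degenerate). Fix a set $\ell$ of edge lengths. Its butterfly: the facet $\Delta=[\mathbf{a}_1\dots\mathbf{a}_n]$ (fixed) and the facets $\Delta_p$ spanned by $\mathbf{b}_p$ and $\mathbf{a}_q$ ($q\ne p$), hinged along the face $F_p$ of $\Delta$ opposite $\mathbf{a}_p$; it is determined (up to isometry) by all edge lengths in $\ell$ except those of the edges $[\mathbf{b}_p\mathbf{b}_q]$. Let $\mathbf{m}$ be a unit normal vector to $\Delta$ (orthogonal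 to the tangent space of $\Delta$), $\mathbf{n}_p$ the unit vector tangent to $\Delta$, orthogonal to $F_p$ and pointing into $\Delta$. Let $\beta_p$ be the length (for $\mathbb{E}^n$), the sine of the length (for $\mathbb{S}^n$), or the hyperbolic sine of the length (for $\Lambda^n$) of the altitude of $\Delta_p$ from $\mathbf{b}_p$. Let $\varphi_p$ be the oriented dihedral angle between $\Delta$ and $\Delta_p$, with $\sin\varphi_p>0$ iff $\Delta_p$ lies on the side of the hyperplane of $\Delta$ into which $\mathbf{m}$ points, $t_p=\tan(\varphi_p/2)\in\mathbb{RP}^1$, and $\mathbf{b}_p^0$ the position of $\mathbf{b}_p$ when $\varphi_p=0$. $G=(g_{pq})$ is the Gram matrix of $\mathbf{n}_1,\dots,\mathbf{n}_n$; $H=(h_{pq})$ with $h_{pq}=\beta_p^{-1}(\mathbf{b}_p^0-\mathbf{a}_r,\mathbf{n}_q)$ for any $r\ne q$ if $\mathbb{X}^n=\mathbb{E}^n$, and $h_{pq}=\beta_p^{-1}(\mathbf{b}_p^0,\mathbf{n}_q)$ otherwise. For $p\ne q$, with $\ell_{\mathbf{b}_p\mathbf{b}_q}$ the prescribed length and $\mathrm{dist}$ the distance in $\mathbb{X}^n$, $E_{pq}=\frac{1}{2\beta_p\beta_q}\bigl(-\tfrac12\ell^2_{\mathbf{b}_p\mathbf{b}_q}+\tfrac12\mathrm{dist}^2(\mathbf{b}_p^0,\mathbf{b}_q^0)\bigr)$ for $\mathbb{E}^n$, $E_{pq}=\frac{1}{2\beta_p\beta_q}\bigl(\cos\ell_{\mathbf{b}_p\mathbf{b}_q}-\cos\mathrm{dist}(\mathbf{b}_p^0,\mathbf{b}_q^0)\bigr)$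 for $\mathbb{S}^n$, $E_{pq}=\frac{1}{2\beta_p\beta_q}\bigl(-\cosh\ell_{\mathbf{b}_p\mathbf{b}_q}+\cosh\mathrm{dist}(\mathbf{b}_p^0,\mathbf{b}_q^0)\bigr)$ for $\Lambda^n$. The configuration space $\Xi(\ell)$ is the set of $(t_1,\dots,t_n)\in(\mathbb{RP}^1)^n$ such that the position of the butterfly with parameters $t_1,\dots,t_n$ gives all edges $[\mathbf{b}_p\mathbf{b}_q]$ their prescribed lengths $\ell_{\mathbf{b}_p\mathbf{b}_q}$. *)

From HB Require Import structures.
From mathcomp Require Import all_boot all_order all_algebra.
From mathcomp Require Import all_classical all_reals all_analysis.
Set Implicit Arguments. Unset Strict Implicit. Unset Printing Implicit Defensive.
Import Order.TTheory GRing.Theory Num.Theory.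
Local Open Scope ring_scope.

Inductive geom := Euc | Sph | Hyp.

Definition isEuc (k : geom) : bool := if k is Euc then true else false.
Definition isHyp (k : geom) : bool := if k is Hyp then true else false.

Definition amb (k : geom) (n : nat) : nat :=
  match k with Euc => n | _ => n.+1 end.

Section Geo.
Context {R : realType} {k : geom} {n : nat}.

Notation V := 'rV[R]_(amb k n).

Definition formSign (i : 'I_(amb k n)) : R :=
  if isHyp k && (nat_of_ord i == n) then -1 else 1.

Definition geomForm (u v : V) : R := \sum_(i < amb k n) formSign i * u 0 i * v 0 i.

(** points of X^n inside V (Lambda^n: the upper sheet of (x,x) = -1) *)
Definition inXn (x : V) : Prop :=
  match k with
  | Euc => True
  | Sph => geomForm x x = 1
  | Hyp => geomForm x x = -1 /\ (forall i : 'I_(amb k n), nat_of_ord i == n -> 0 < x 0 i)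
  end.

Definition coshR (x : R) : R := (expR x + expR (- x)) / 2.
Definition acoshR (x : R) : R := ln (x + Num.sqrt (x ^+ 2 - 1)).

Definition geomDist (x y : V) : R :=
  match k with
  | Euc => Num.sqrt (geomForm (x - y) (x - y))
  | Sph => acos (geomForm x y)
  | Hyp => acoshR (- geomForm x y)
  end.

(** non-degeneracy of the simplex with vertices v_1..v_n :
    affine independence (E^n), linear independence in V (S^n, Lambda^n) *)
Definition nondegSimplex (v : 'I_n -> V) : Prop :=
  forall lam : 'I_n -> R,
    (isEuc k -> \sum_(i < n) lam i = 0) ->
    \sum_(i < n) lam i *: v i = 0 -> forall i, lam i = 0.

Definition relv (x r : V) : V := if isEuc k then x - r else x.

Definition unitNormal (a : 'I_n -> V) (m : V) : Prop :=
  geomForm m m = 1 /\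
  (forall i j, geomForm m (relv (a i) (a j)) = 0).

Definition inDeltaDir (a : 'I_n -> V) (v : V) : Prop :=
  exists lam : 'I_n -> R, (isEuc k -> \sum_(i < n) lam i = 0) /\
    v = \sum_(i < n) lam i *: a i.

(** nv is the unit vector tangent to Delta, orthogonal to the face F_p of Delta
    opposite a_p, pointing into Delta *)
Definition innerFacetNormal (a : 'I_n -> V) (p : 'I_n) (nv : V) : Prop :=
  inDeltaDir a nv /\ geomForm nv nv = 1 /\
  (forall q r, q != p -> r != p -> geomForm nv (relv (a q) (a r)) = 0) /\
  (forall r, r != p -> 0 < geomForm nv (relv (a p) (a r))).

Definition replaceVertex (a : 'I_n -> V) (p : 'I_n) (b : V) : 'I_n -> V :=
  fun i => if i == p then b else a i.

(** some index different from p (used as the base point a_r, r <> p, in E^n;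
    the value of the inner products does not depend on the choice) *)
Definition otherIdx (p : 'I_n) : nat := if nat_of_ord p == 0%N then 1%N else 0%N.

Section Butterfly.
Variables (a : 'I_n -> V) (m : V) (nv : 'I_n -> V) (b0 : 'I_n -> V).

Definition baseVertex (p : 'I_n) : V :=
  match insub (otherIdx p) with Some r => a r | None => 0 end.

(** beta_p : (the length / sine / sinh of) the altitude of Delta_p from b_p,
    computed as the n_p-component of b_p^0 *)
Definition betaAlt (p : 'I_n) : R := geomForm (relv (b0 p) (baseVertex p)) (nv p).

Definition gramG (p q : 'I_n) : R := geomForm (nv p) (nv q).

Definition baseVertexq (q : 'I_n) : V := baseVertex q.
Definition matH (p q : 'I_n) : R := (betaAlt p)^-1 * geomForm (relv (b0 p) (baseVertexq q)) (nv q).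

Definition matE (ell : 'I_n -> 'I_n -> R) (p q : 'I_n) : R :=
  (2 * betaAlt p * betaAlt q)^-1 *
  match k with
  | Euc => - (ell p q) ^+ 2 / 2 + (geomDist (b0 p) (b0 q)) ^+ 2 / 2
  | Sph => cos (ell p q) - cos (geomDist (b0 p) (b0 q))
  | Hyp => - coshR (ell p q) + coshR (geomDist (b0 p) (b0 q))
  end.

Definition coefA ell (p q : 'I_n) : R := matH q p + matH p q - 2 * gramG p q + matE ell p q.
Definition coefB ell (p q : 'I_n) : R := matH q p + matE ell p q.

(** position of b_p when Delta_p is rotated about F_p to oriented dihedral
    angle phi with Delta (phi = 0 : b_p = b_p^0 ; sin phi > 0 : on the side of m):
    b_p(phi) = b_p^0 + beta_p ((cos phi - 1) n_p + sin phi m) *)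
Definition bPos (p : 'I_n) (phi : R) : V :=
  b0 p + betaAlt p *: ((cos phi - 1) *: nv p + sin phi *: m).

(** RP^1 = R u {oo} as option R (None = oo), and t = tan(phi/2) *)
Definition halfTan (phi : R) : option R :=
  if cos (phi / 2) == 0 then None else Some (sin (phi / 2) / cos (phi / 2)).

Definition homCoords (t : option R) : R * R :=
  match t with Some s => (s, 1) | None => (1, 0) end.

Definition configSpace (ell : 'I_n -> 'I_n -> R) : set ('I_n -> option R) :=
  [set t | exists phi : 'I_n -> R,
     (forall p, t p = halfTan (phi p)) /\
     (forall p q, p != q -> geomDist (bPos p (phi p)) (bPos q (phi q)) = ell p q)].

Definition eqVariety (ell : 'I_n -> 'I_n -> R) : set ('I_n -> option R) :=
  [set t | forall p q : 'I_n, (p < q)%N ->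
     let (xp, yp) := homCoords (t p) in let (xq, yq) := homCoords (t q) in
     coefA ell p q * xp ^+ 2 * xq ^+ 2 + coefB ell p q * xp ^+ 2 * yq ^+ 2
     - 2 * xp * yp * xq * yq + coefB ell q p * yp ^+ 2 * xq ^+ 2
     + matE ell p q * yp ^+ 2 * yq ^+ 2 = 0].

End Butterfly.
End Geo.

From Pilot Require Import Defs.
From mathcomp Require Import all_boot all_order all_algebra.
From mathcomp Require Import all_classical all_reals all_analysis.
From mathcomp Require Import ring lra.
Import Order.TTheory GRing.Theory Num.Theory.
Local Open Scope ring_scope.

(* Encode a distance d of
   X^n by -d^2/2, cos d or -cosh d; the encoded distance between two points is
   then a quadratic expression in the points, and expanding it with
   (m, n_p) = 0 and (b_p^0, n_q) = beta_p h_pq shows that the encoded distance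
   between b_p and b_q is that between b_p^0 and b_q^0 plus beta_p beta_q W_pq, where
   W_pq = (cos phi_q - 1) h_pq + (cos phi_p - 1) h_qp
          + (cos phi_p - 1)(cos phi_q - 1) g_pq + sin phi_p sin phi_q.
   The encoding being injective on admissible lengths, [b_p b_q] has length
   l_pq iff W_pq = 2 E_pq, and the substitution cos phi = (y^2 - x^2)/(x^2 + y^2),
   sin phi = 2xy/(x^2 + y^2) with t = x/y = tan(phi/2) turns this equation into
   the stated bihomogeneous one. *)

Section BilinearForm.
Context {R : realType} {k : geom} {n : nat}.
Implicit Types u v w : 'rV[R]_(amb k n).

Lemma geomFormC u v : geomForm u v = geomForm v u.
Proof. by apply: eq_bigr => i _; rewrite mulrAC. Qed.

Lemma geomFormDl u v w : geomForm (u + v) w = geomForm u w + geomForm v w.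
Proof.
by rewrite /geomForm -big_split; apply: eq_bigr => i _; rewrite mxE mulrDr mulrDl.
Qed.

Lemma geomFormZl (c : R) u w : geomForm (c *: u) w = c * geomForm u w.
Proof. by rewrite /geomForm mulr_sumr; apply: eq_bigr => i _; rewrite mxE; ring. Qed.

Lemma geomFormNl u w : geomForm (- u) w = - geomForm u w.
Proof. by rewrite -scaleN1r geomFormZl mulN1r. Qed.

Lemma geomFormBl u v w : geomForm (u - v) w = geomForm u w - geomForm v w.
Proof. by rewrite geomFormDl geomFormNl. Qed.

Lemma geomFormDr u v w : geomForm w (u + v) = geomForm w u + geomForm w v.
Proof. by rewrite geomFormC geomFormDl !(geomFormC w). Qed.

Lemma geomFormZr (c : R) u w : geomForm w (c *: u) = c * geomForm w u.
Proof. by rewrite geomFormC geomFormZl (geomFormC w). Qed.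

Lemma geomFormNr u w : geomForm w (- u) = - geomForm w u.
Proof. by rewrite geomFormC geomFormNl geomFormC. Qed.

Lemma geomFormBr u v w : geomForm w (u - v) = geomForm w u - geomForm w v.
Proof. by rewrite geomFormC geomFormBl !(geomFormC w). Qed.

Lemma geomForm_suml (I : Type) (r : seq I) (F : I -> 'rV[R]_(amb k n)) w :
  geomForm (\sum_(i <- r) F i) w = \sum_(i <- r) geomForm (F i) w.
Proof.
elim/big_rec2: _ => [|i x y _ <-]; last by rewrite geomFormDl.
by rewrite -(scale0r 0) geomFormZl mul0r.
Qed.

Lemma geomForm_self_ge0 u : ~~ isHyp k -> 0 <= geomForm u u.
Proof.
move/negbTE=> hk; apply: sumr_ge0 => i _.
by rewrite /formSign hk mul1r -expr2 sqr_ge0.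
Qed.

End BilinearForm.

Section ModelSpaces.
Context {R : realType} {n : nat}.

Lemma sph_form_bound (x y : 'rV[R]_(amb Sph n)) :
  geomForm x x = 1 -> geomForm y y = 1 -> -1 <= geomForm x y <= 1.
Proof.
move=> hx hy.
have := geomForm_self_ge0 (x - y) erefl; have := geomForm_self_ge0 (x + y) erefl.
rewrite !(geomFormBl, geomFormBr, geomFormDl, geomFormDr) hx hy (geomFormC y x).
by move=> *; apply/andP; split; lra.
Qed.

(* Reverse Cauchy-Schwarz on the hyperboloid: the Lorentzian square of
   y_0 x - x_0 y (x_0, y_0 the last coordinates) is nonnegative, the last
   coordinate of that vector being 0. *)
Lemma hyperboloid_form_bound (x y : 'rV[R]_(amb Hyp n)) :
  geomForm x x = -1 -> geomForm y y = -1 ->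
  2 * (x 0 ord_max * y 0 ord_max) * geomForm x y <=
  - (x 0 ord_max ^+ 2 + y 0 ord_max ^+ 2).
Proof.
move=> hx hy; set x0 := x 0 ord_max; set y0 := y 0 ord_max.
have : 0 <= geomForm (y0 *: x - x0 *: y) (y0 *: x - x0 *: y).
  apply: sumr_ge0 => i _; rewrite /formSign /=.
  case: eqP => [hi | _]; last by rewrite mul1r -expr2 sqr_ge0.
  have -> : i = ord_max by apply: val_inj.
  by rewrite !mxE -/x0 -/y0 [y0 * x0]mulrC subrr !mulr0.
rewrite !(geomFormBl, geomFormBr, geomFormZl, geomFormZr) hx hy (geomFormC y x).
lra.
Qed.

Lemma hyperboloid_sheet (x y : 'rV[R]_(amb Hyp n)) :
  geomForm x x = -1 -> geomForm y y = -1 -> geomForm x y < 0 ->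
  0 < y 0 ord_max -> 0 < x 0 ord_max.
Proof.
move=> hx hy hxy hy0; have := hyperboloid_form_bound x y hx hy.
move: (x 0 ord_max) (y 0 ord_max) hy0 => x0 y0 hy0 hb.
rewrite ltNge; apply/negP => hx0.
have : x0 * y0 <= 0 by nra.
move: (x0 * y0) hb => z; nra.
Qed.

Lemma hyperboloid_form_le (x y : 'rV[R]_(amb Hyp n)) :
  geomForm x x = -1 -> geomForm y y = -1 ->
  0 < x 0 ord_max -> 0 < y 0 ord_max -> geomForm x y <= -1.
Proof.
move=> hx hy; have := hyperboloid_form_bound x y hx hy.
move: (x 0 ord_max) (y 0 ord_max) => x0 y0 hb hx0 hy0.
have xy0 : 0 < x0 * y0 by apply: mulr_gt0.
have : 2 * (x0 * y0) <= x0 ^+ 2 + y0 ^+ 2.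
  by have := sqr_ge0 (x0 - y0); rewrite sqrrB; lra.
move: (x0 * y0) (x0 ^+ 2 + y0 ^+ 2) xy0 hb => z w; nra.
Qed.

End ModelSpaces.

Section HyperbolicCosine.
Context {R : realType}.

Lemma coshRK (l : R) : 0 <= l -> acoshR (coshR l) = l.
Proof.
move=> hl; rewrite /acoshR /coshR expRN.
have : 1 <= expR l by have := expR_ge1Dx l; lra.
move Ee : (expR l) => e he; have e0 : e != 0 by rewrite gt_eqF //; lra.
have -> : ((e + e^-1) / 2) ^+ 2 - 1 = ((e - e^-1) / 2) ^+ 2 by field.
rewrite sqrtr_sqr ger0_norm; last first.
  by rewrite divr_ge0 // subr_ge0 (le_trans _ he) // invf_le1 //; lra.
have -> : (e + e^-1) / 2 + (e - e^-1) / 2 = e by field.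
by rewrite -Ee expRK.
Qed.

Lemma acoshRK (X : R) : 1 <= X -> coshR (acoshR X) = X.
Proof.
move=> hX; rewrite /coshR /acoshR.
have s2 : Num.sqrt (X ^+ 2 - 1) ^+ 2 = X ^+ 2 - 1 by rewrite sqr_sqrtr //; nra.
have s0 := sqrtr_ge0 (X ^+ 2 - 1).
move: (Num.sqrt _) s2 s0 => s s2 s0; have u0 : 0 < X + s by lra.
rewrite expRN lnK ?posrE //.
have -> : (X + s)^-1 = X - s.
  apply: (@mulfI _ (X + s)); first by rewrite gt_eqF.
  by rewrite mulfV ?gt_eqF //; nra.
by field.
Qed.

End HyperbolicCosine.

(* A distance d of X^n is encoded by [cosDist k d], and [modelForm x y] is the
   encoded distance between x and y, expressed through the points. *)
Definition cosDist {R : realType} (k : geom) (d : R) : R :=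
  match k with Euc => - d ^+ 2 / 2 | Sph => cos d | Hyp => - coshR d end.

Section ModelForm.
Context {R : realType} {k : geom} {n : nat}.
Implicit Types x y : 'rV[R]_(amb k n).

Definition modelForm x y : R :=
  if isEuc k then - geomForm (x - y) (x - y) / 2 else geomForm x y.

End ModelForm.

Section ModelDistance.
Context {R : realType} {k : geom} {n : nat}.
Implicit Types x y : 'rV[R]_(amb k n).

Lemma geomDistC x y : geomDist x y = geomDist y x.
Proof.
rewrite /geomDist; case: k x y => x y; rewrite ?(geomFormC x) //.
by rewrite -opprB !(geomFormNl, geomFormC _ (- _)) opprK.
Qed.

Lemma cosDist_geomDist x y :
  inXn x -> inXn y -> cosDist k (geomDist x y) = modelForm x y.
Proof.
rewrite /inXn /cosDist /geomDist /modelForm; case: k x y => x y /= hx hy.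
- by rewrite sqr_sqrtr ?mulNr // geomForm_self_ge0.
- by rewrite acosK // in_itv /= sph_form_bound.
- rewrite acoshRK ?opprK // lerNr.
  by apply: hyperboloid_form_le; rewrite ?hx.1 ?hy.1 ?hx.2 ?hy.2.
Qed.

Lemma geomDist_eq_iff x y (l : R) : inXn x -> inXn y ->
  0 <= l -> (k = Sph -> l <= pi) ->
  geomDist x y = l <-> modelForm x y = cosDist k l.
Proof.
move=> hx hy hl hlpi; split=> [<-|]; first by rewrite cosDist_geomDist.
rewrite /modelForm /cosDist /geomDist; case: k x y hlpi {hx hy} => x y hlpi /=.
- move=> hF; have -> : geomForm (x - y) (x - y) = l ^+ 2 by lra.
  by rewrite sqrtr_sqr ger0_norm.
- by move=> ->; rewrite cosK // in_itv /= hl hlpi.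
- by move=> ->; rewrite opprK coshRK.
Qed.

Lemma inXn_of_modelForm x y : inXn y ->
  modelForm x x = modelForm y y -> modelForm x y <= modelForm y y -> inXn x.
Proof.
rewrite /inXn /modelForm; case: k x y => x y //= => [hy -> // | [hy1 hy2] hxx hxy].
have hx1 : geomForm x x = -1 by rewrite hxx.
split=> // i /eqP hi; have -> : i = ord_max by apply: val_inj.
by apply: (hyperboloid_sheet x y hx1 hy1); [lra | apply: hy2].
Qed.

End ModelDistance.

Lemma matE_cosDist (R : realType) (k : geom) (n : nat)
  (a nv b0 : 'I_n -> 'rV[R]_(amb k n)) (ell : 'I_n -> 'I_n -> R) (p q : 'I_n) :
  matE a nv b0 ell p q = (2 * betaAlt a nv b0 p * betaAlt a nv b0 q)^-1
    * (cosDist k (ell p q) - cosDist k (geomDist (b0 p) (b0 q))).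
Proof. by rewrite /matE /cosDist; case: k a nv b0 => *; congr (_ * _); ring. Qed.

Section HalfTangent.
Context {R : realType}.

Lemma halfTan_homCoords {phi x y : R} : homCoords (halfTan phi) = (x, y) ->
  [/\ 0 < x ^+ 2 + y ^+ 2, (cos phi - 1) * (x ^+ 2 + y ^+ 2) = - 2 * x ^+ 2
    & sin phi * (x ^+ 2 + y ^+ 2) = 2 * x * y].
Proof.
have ec : cos phi = cos (phi / 2) ^+ 2 - sin (phi / 2) ^+ 2.
  by rewrite {1}(splitr phi) cosD !expr2.
have es : sin phi = 2 * sin (phi / 2) * cos (phi / 2).
  by rewrite {1}(splitr phi) sinD; ring.
rewrite /halfTan ec es; have := cos2Dsin2 (phi / 2).
move: (cos _) (sin _) => C S e1.
case: eqP => [C0 [<- <-] | /eqP C0 [<- <-]].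
  have S2 : S ^+ 2 = 1 by rewrite -e1 C0; ring.
  by rewrite C0 S2; split; [lra | ring | ring].
have -> : (S / C) ^+ 2 + 1 ^+ 2 = (C ^+ 2 + S ^+ 2) / C ^+ 2 by field.
rewrite e1 div1r.
have -> : C ^+ 2 - S ^+ 2 - 1 = - 2 * S ^+ 2 by lra.
by split; [rewrite invr_gt0 lt0r sqrf_eq0 C0 sqr_ge0 | field | field].
Qed.

Definition halfTanInv (t : option R) : R := if t is Some s then 2 * atan s else pi.

Lemma halfTanInvK : cancel halfTanInv halfTan.
Proof.
case=> [s|]; rewrite /halfTan /=; last by rewrite cos_pihalf eqxx.
have -> : 2 * atan s / 2 = atan s by field.
have -> : (cos (atan s) == 0) = false.
  by rewrite cos_atan invr_eq0 gt_eqF // sqrtr_gt0; nra.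
by rewrite -/(tan (atan s)) atanK.
Qed.

(* With cos phi_i - 1 = -2 x_i^2 / N_i and sin phi_i = 2 x_i y_i / N_i, the
   trigonometric equation times N_1 N_2 is -2 times the bihomogeneous one. *)
Lemma halfAngle_bihom_iff (h12 h21 g E c1 s1 c2 s2 x1 y1 x2 y2 : R) :
  0 < x1 ^+ 2 + y1 ^+ 2 -> (c1 - 1) * (x1 ^+ 2 + y1 ^+ 2) = - 2 * x1 ^+ 2 ->
  s1 * (x1 ^+ 2 + y1 ^+ 2) = 2 * x1 * y1 ->
  0 < x2 ^+ 2 + y2 ^+ 2 -> (c2 - 1) * (x2 ^+ 2 + y2 ^+ 2) = - 2 * x2 ^+ 2 ->
  s2 * (x2 ^+ 2 + y2 ^+ 2) = 2 * x2 * y2 ->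
  (c2 - 1) * h12 + (c1 - 1) * h21 + (c1 - 1) * (c2 - 1) * g + s1 * s2 = 2 * E <->
  (h21 + h12 - 2 * g + E) * x1 ^+ 2 * x2 ^+ 2 + (h21 + E) * x1 ^+ 2 * y2 ^+ 2
  - 2 * x1 * y1 * x2 * y2 + (h12 + E) * y1 ^+ 2 * x2 ^+ 2
  + E * y1 ^+ 2 * y2 ^+ 2 = 0.
Proof.
move=> N1p hc1 hs1 N2p hc2 hs2.
set W := (X in X = 2 * E <-> _); set P := (X in _ <-> X = 0).
have key : (x1 ^+ 2 + y1 ^+ 2) * (x2 ^+ 2 + y2 ^+ 2) * (W - 2 * E) = - 2 * P.
  transitivity ((x1 ^+ 2 + y1 ^+ 2) * ((c2 - 1) * (x2 ^+ 2 + y2 ^+ 2)) * h12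
    + (x2 ^+ 2 + y2 ^+ 2) * ((c1 - 1) * (x1 ^+ 2 + y1 ^+ 2)) * h21
    + ((c1 - 1) * (x1 ^+ 2 + y1 ^+ 2)) * ((c2 - 1) * (x2 ^+ 2 + y2 ^+ 2)) * g
    + (s1 * (x1 ^+ 2 + y1 ^+ 2)) * (s2 * (x2 ^+ 2 + y2 ^+ 2))
    - 2 * E * (x1 ^+ 2 + y1 ^+ 2) * (x2 ^+ 2 + y2 ^+ 2)); first by rewrite /W; ring.
  by rewrite hc1 hs1 hc2 hs2 /P; ring.
split=> [hW | hP]; first by move: key; rewrite hW subrr mulr0; lra.
have NN : (x1 ^+ 2 + y1 ^+ 2) * (x2 ^+ 2 + y2 ^+ 2) != 0.
  by rewrite mulf_neq0 ?gt_eqF.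
apply/eqP; rewrite -subr_eq0; move/eqP: key.
by rewrite hP mulr0 mulf_eq0 (negbTE NN).
Qed.

End HalfTangent.

Section Butterfly.
Context {R : realType} {k : geom} {n : nat}.
Variables (a : 'I_n -> 'rV[R]_(amb k n)) (m : 'rV[R]_(amb k n))
  (nv b0 : 'I_n -> 'rV[R]_(amb k n)) (ell : 'I_n -> 'I_n -> R).
Hypotheses (m_unit : geomForm m m = 1)
  (m_orth : forall i j, geomForm m (relv (a i) (a j)) = 0)
  (nv_facet : forall p, innerFacetNormal a p (nv p))
  (b0_inXn : forall p, inXn (b0 p))
  (b0_orth : forall p, geomForm (relv (b0 p) (a p)) m = 0)
  (beta_gt0 : forall p, 0 < betaAlt a nv b0 p)
  (ell_sym : forall p q, ell p q = ell q p)
  (ell_ge0 : forall p q, 0 <= ell p q)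
  (ell_le_pi : k = Sph -> forall p q, ell p q <= pi).

Local Notation beta := (betaAlt a nv b0).
Local Notation h := (matH a nv b0).
Local Notation g := (gramG nv).
Local Notation E := (matE a nv b0 ell).
Local Notation bPos := (bPos a m nv b0).

Lemma nv_unit p : geomForm (nv p) (nv p) = 1.
Proof. by case: (nv_facet p) => _ []. Qed.

Lemma nv_orth p : geomForm (nv p) m = 0.
Proof.
case: (nv_facet p) => [[lam [lam_sum ->]] _]; rewrite geomForm_suml.
case hE: (isEuc k); last first.
  apply: big1 => i _; have := m_orth i i.
  by rewrite /relv hE geomFormZl geomFormC => ->; rewrite mulr0.
have am i : geomForm (a i) m = geomForm (a p) m.
  have := m_orth i p; rewrite /relv hE geomFormC geomFormBl.
  by move/eqP; rewrite subr_eq0 => /eqP.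
under eq_bigr do rewrite geomFormZl am.
by rewrite -mulr_suml lam_sum // mul0r.
Qed.

Lemma relv_b0_orth p q : geomForm (relv (b0 p) (b0 q)) m = 0.
Proof.
have := b0_orth p; have := b0_orth q; have := m_orth p q.
rewrite /relv; case: (isEuc k) => [|_ _ //].
rewrite !(geomFormBl, geomFormBr) (geomFormC m (a p)) (geomFormC m (a q)); lra.
Qed.

Lemma beta_matH p q : beta p * h p q = geomForm (relv (b0 p) (baseVertex a q)) (nv q).
Proof. by rewrite /matH mulrA mulfV ?mul1r // gt_eqF. Qed.

Lemma matH_diag p : h p p = 1.
Proof. by rewrite /matH /baseVertexq -/(beta p) mulVf // gt_eqF. Qed.

Lemma matEC p q : E p q = E q p.
Proof. by rewrite !matE_cosDist ell_sym geomDistC [2 * _ * _]mulrAC. Qed.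

Definition rotDir p f := (cos f - 1) *: nv p + sin f *: m.

Lemma bPosE p f : bPos p f = b0 p + beta p *: rotDir p f.
Proof. by []. Qed.

Lemma bPos0 p : bPos p 0 = b0 p.
Proof. by rewrite bPosE /rotDir cos0 sin0 subrr !scale0r addr0 scaler0 addr0. Qed.

Lemma geomForm_rotDir p q fp fq : geomForm (rotDir p fp) (rotDir q fq)
  = (cos fp - 1) * (cos fq - 1) * g p q + sin fp * sin fq.
Proof.
rewrite !(geomFormDl, geomFormDr, geomFormZl, geomFormZr).
by rewrite (geomFormC m (nv q)) !nv_orth m_unit /gramG; ring.
Qed.

Lemma geomForm_rotDir_self p f : geomForm (rotDir p f) (rotDir p f) = - 2 * (cos f - 1).
Proof. by rewrite geomForm_rotDir /gramG nv_unit; have := cos2Dsin2 f; nra. Qed.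

Lemma geomForm_rotDirr q f {x} :
  geomForm x m = 0 -> geomForm x (rotDir q f) = (cos f - 1) * geomForm x (nv q).
Proof. by move=> xm; rewrite geomFormDr !geomFormZr xm mulr0 addr0. Qed.

Definition foldTerm p q fp fq : R :=
  (cos fq - 1) * h p q + (cos fp - 1) * h q p
  + (cos fp - 1) * (cos fq - 1) * g p q + sin fp * sin fq.

Lemma foldTermC p q fp fq : foldTerm q p fq fp = foldTerm p q fp fq.
Proof. by rewrite /foldTerm /gramG geomFormC; ring. Qed.

Lemma foldTerm_diag p f : foldTerm p p f f = 0.
Proof. by rewrite /foldTerm /gramG matH_diag nv_unit; have := cos2Dsin2 f; nra. Qed.

Lemma foldTerm_diag0 p f : foldTerm p p f 0 = cos f - 1.
Proof. by rewrite /foldTerm matH_diag cos0 sin0; ring. Qed.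

Lemma modelForm_bPos p q fp fq : modelForm (bPos p fp) (bPos q fq)
  = modelForm (b0 p) (b0 q) + beta p * beta q * foldTerm p q fp fq.
Proof.
have upq := geomForm_rotDir p q fp fq.
rewrite /modelForm !bPosE; case hE: (isEuc k); last first.
  have b0n r s : geomForm (b0 r) (nv s) = beta r * h r s by rewrite beta_matH /relv hE.
  have b0m r : geomForm (b0 r) m = 0 by have := relv_b0_orth r r; rewrite /relv hE.
  have b0p_uq := geomForm_rotDirr q fq (b0m p); rewrite b0n in b0p_uq.
  have b0q_up := geomForm_rotDirr p fp (b0m q); rewrite b0n geomFormC in b0q_up.
  move: (rotDir p fp) (rotDir q fq) upq b0p_uq b0q_up => up uq upq b0p_uq b0q_up.
  rewrite !(geomFormDl, geomFormDr, geomFormZl, geomFormZr) upq b0p_uq b0q_up.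
  by rewrite /foldTerm; ring.
set D := b0 p - b0 q.
have Dm : geomForm D m = 0 by have := relv_b0_orth p q; rewrite /relv hE.
have Dn s : geomForm D (nv s) = beta p * h p s - beta q * h q s.
  by rewrite !beta_matH /relv hE -geomFormBl opprB addrA subrK.
have D_up := geomForm_rotDirr p fp Dm; have D_uq := geomForm_rotDirr q fq Dm.
rewrite !Dn !matH_diag in D_up D_uq.
have up_up := geomForm_rotDir_self p fp; have uq_uq := geomForm_rotDir_self q fq.
have -> : b0 p + beta p *: rotDir p fp - (b0 q + beta q *: rotDir q fq)
    = D + (beta p *: rotDir p fp - beta q *: rotDir q fq) by rewrite opprD addrACA.
clearbody D.
move: (rotDir p fp) (rotDir q fq) upq D_up D_uq up_up uq_uq.
move=> up uq upq D_up D_uq up_up uq_uq.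
rewrite !(geomFormDl, geomFormDr, geomFormNl, geomFormNr, geomFormZl, geomFormZr).
rewrite (geomFormC up D) (geomFormC uq D) (geomFormC uq up).
by rewrite upq D_up D_uq up_up uq_uq /foldTerm; field.
Qed.

Lemma bPos_inXn p f : inXn (bPos p f).
Proof.
apply: (inXn_of_modelForm _ _ (b0_inXn p)).
  by rewrite modelForm_bPos foldTerm_diag mulr0 addr0.
rewrite -{1}(bPos0 p) modelForm_bPos foldTerm_diag0 gerDl.
by apply: mulr_ge0_le0; [apply: mulr_ge0; apply: ltW | rewrite subr_le0 cos_le1].
Qed.

Lemma geomDist_bPos_iff p q fp fq :
  geomDist (bPos p fp) (bPos q fq) = ell p q <-> foldTerm p q fp fq = 2 * E p q.
Proof.
have ell_pi : k = Sph -> ell p q <= pi by move/ell_le_pi.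
rewrite (geomDist_eq_iff _ _ _ (bPos_inXn p fp) (bPos_inXn q fq) (ell_ge0 p q) ell_pi).
rewrite modelForm_bPos matE_cosDist cosDist_geomDist //.
have := beta_gt0 p; have := beta_gt0 q.
move: (beta p) (beta q) => bp bq bq0 bp0.
by split=> [<- | ->]; field; rewrite !gt_eqF.
Qed.

Lemma foldTerm_halfTan_iff p q fp fq :
  foldTerm p q fp fq = 2 * E p q <->
  let (xp, yp) := homCoords (halfTan fp) in let (xq, yq) := homCoords (halfTan fq) in
  Defs.coefA a nv b0 ell p q * xp ^+ 2 * xq ^+ 2
  + Defs.coefB a nv b0 ell p q * xp ^+ 2 * yq ^+ 2
  - 2 * xp * yp * xq * yq + Defs.coefB a nv b0 ell q p * yp ^+ 2 * xq ^+ 2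
  + E p q * yp ^+ 2 * yq ^+ 2 = 0.
Proof.
case ep: (homCoords (halfTan fp)) => [xp yp].
case eq: (homCoords (halfTan fq)) => [xq yq].
have [Np cp sp] := halfTan_homCoords ep; have [Nq cq sq] := halfTan_homCoords eq.
by rewrite /Defs.coefA /Defs.coefB (matEC q p); apply: halfAngle_bihom_iff.
Qed.

End Butterfly.

Theorem mainTheorem9 (R : realType) (k : geom) (n : nat)
  (a : 'I_n -> 'rV[R]_(amb k n)) (m : 'rV[R]_(amb k n))
  (nv : 'I_n -> 'rV[R]_(amb k n)) (b0 : 'I_n -> 'rV[R]_(amb k n))
  (ell : 'I_n -> 'I_n -> R) :
  (forall i, inXn (a i)) ->
  nondegSimplex a ->
  unitNormal a m ->
  (forall p, innerFacetNormal a p (nv p)) ->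
  (forall p, inXn (b0 p)) ->
  (forall p, nondegSimplex (replaceVertex a p (b0 p))) ->
  (forall p, geomForm (relv (b0 p) (a p)) m = 0) ->
  (forall p, 0 < betaAlt a nv b0 p) ->
  (forall p q, ell p q = ell q p) ->
  (forall p q, 0 <= ell p q) ->
  (k = Sph -> forall p q, ell p q <= pi) ->
  configSpace a m nv b0 ell = eqVariety a nv b0 ell.
Proof.
move=> _ _ [m_unit m_orth] nv_facet b0_inXn _ b0_orth beta_gt0.
move=> ell_sym ell_ge0 ell_le_pi.
have dist_iff := geomDist_bPos_iff _ _ _ _ _ m_unit m_orth nv_facet b0_inXn b0_orth
  beta_gt0 ell_ge0 ell_le_pi.
have poly_iff := foldTerm_halfTan_iff _ _ _ _ ell_sym.
apply/seteqP; split=> t.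
  case=> phi [t_phi phi_dist] p q lt_pq; rewrite !t_phi.
  by apply/poly_iff/dist_iff/phi_dist; rewrite neq_ltn lt_pq.
move=> t_eq; exists (fun p => halfTanInv (t p)); split=> [p | p q neq_pq].
  by rewrite halfTanInvK.
apply/dist_iff; case: (ltngtP p q) => [lt_pq | lt_qp | eq_pq].
- by apply/poly_iff; rewrite !halfTanInvK; apply: t_eq.
- rewrite -foldTermC (matEC _ _ _ _ ell_sym).
  by apply/poly_iff; rewrite !halfTanInvK; apply: t_eq.
- by move: neq_pq; rewrite (val_inj eq_pq) eqxx.
Qed.
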